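(* Let $R,S\subset\Sigma$ be finite unions of $(-m,m)$-cylinders. Then for every integer $n\ge M+2m$: if $\alpha\ge0$, $$\kappa^{-1}\mu_\phi(S)\int_\Sigma e^{\alpha r_R^{n-(M+2m)}}d\mu_\phi\le\int_S e^{\alpha r_R^n}d\mu_\phi\le\kappa\,\mu_\phi(S)e^{\alpha(M+2m)}\int_\Sigma e^{\alpha r_R^n}d\mu_\phi;$$ if $\alpha\le0$, $$\kappa^{-1}\mu_\phi(S)e^{\alpha(M+2m)}\int_\Sigma e^{\alpha r_R^n}d\mu_\phi\le\int_S e^{\alpha r_R^n}d\mu_\phi\le\kappa\,\mu_\phi(S)\int_\Sigma e^{\alpha r_R^{n-(M+2m)}}d\mu_\phi.$$
   Context: $(\Sigma,\sigma)$ is a two-sided mixing subshift of finite type on $\{1,\dots,N\}$ (sequences $x=(x_n)_{n\in\mathbb{Z}}$ with $a_{x_nx_{n+1}}=1$ for an aperiodic $0$-$1$ matrix $(a_{ij})$), $\phi$ is Hölder continuous and $\mu_\phi$ its unique equilibrium state. A $(-m,m)$-cylinder is a set $\{x: x_j=i_j,\ -m\le j\le m\}$. $M>0$ and $\kappa>1$ are constants such that for all integrable $f,g$ with $f(x)$ depending only on $(x_n)_{n\le p}$ and $g(x)$ depending only on $(x_n)_{n\ge p+M}$ (any $p$), $\kappa^{-1}\int f\,d\mu_\phi\int g\,d\mu_\phi\le\int fg\,d\mu_\phi\le\kappa\int f\,d\mu_\phi\int g\,d\mu_\phi$ (such constants exist by the $\psi$-mixing property of $\mu_\phi$). For $D\subset\Sigma$,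 $r_D(x)$ is the smallest integer $n\ge1$ with $\sigma^n x\in D$ ($+\infty$ if none), $r_D^1=r_D$, $r_D^{n+1}=r_D^n+r_D\circ\sigma^{r_D^n}$. *)

From HB Require Import structures.
From mathcomp Require Import all_boot all_order all_algebra.
From mathcomp Require Import all_classical all_reals all_analysis.
Unset Printing Implicit Defensive.
Import Order.TTheory GRing.Theory Num.Theory numFieldNormedType.Exports.
Local Open Scope classical_set_scope.
Local Open Scope ring_scope.

(* Alphabet: 'I_N.+1 (N.+1 symbols, standing for {1,...,N+1}).
   Full sequence space: int -> 'I_N.+1.  The SFT Sigma_A is a subset of it,
   and all measures considered are carried by Sigma_A. *)

(* technical: the alphabet is inhabited (needed for the measurable structure) *)
HB.instance Definition _ (n : nat) := isPointed.Build 'I_n.+1 ord0.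

Definition zero_one_mx {N : nat} (A : 'M[int]_N.+1) : Prop :=
  forall i j, A i j = 0 \/ A i j = 1.

Definition aperiodic_mx {N : nat} (A : 'M[int]_N.+1) : Prop :=
  exists k : nat, (0 < k)%N /\ forall i j, 0 < (A ^+ k) i j.

Definition SigmaA {N : nat} (A : 'M[int]_N.+1) : set (int -> 'I_N.+1) :=
  [set x | forall n : int, A (x n) (x (n + 1)) = 1].

Definition shift {N : nat} (x : int -> 'I_N.+1) : int -> 'I_N.+1 :=
  fun n => x (n + 1).

Definition iter_shift {N : nat} (k : nat) (x : int -> 'I_N.+1) :
  int -> 'I_N.+1 := iter k (@shift N) x.

(* coordinate cylinders of the full sequence space: they generate the
   product (= Borel) sigma-algebra *)
Definition cylinders (N : nat) : set (set (int -> 'I_N.+1)) :=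
  [set C | exists (m : nat) (w : int -> 'I_N.+1),
     C = [set x | forall j : int, (- (m%:Z) <= j <= m%:Z) -> x j = w j]].

Notation Seq N := (g_sigma_algebraType (cylinders N)).

Definition cyl {N : nat} (A : 'M[int]_N.+1) (m : nat) (w : int -> 'I_N.+1)
  : set (int -> 'I_N.+1) :=
  [set x | SigmaA A x /\ forall j : int, (- (m%:Z) <= j <= m%:Z) -> x j = w j].

Definition cyl_union {N : nat} (A : 'M[int]_N.+1) (m : nat)
  (S : set (int -> 'I_N.+1)) : Prop :=
  exists s : seq (int -> 'I_N.+1), S = \big[setU/set0]_(w <- s) cyl A m w.

(* Hoelder continuity on Sigma_A, for the metric
   d(x,y) = theta0^{min{|n| : x_n <> y_n}} (any theta0 in (0,1)) *)
Definition holder {R : realType} {N : nat} (A : 'M[int]_N.+1)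
  (phi : (int -> 'I_N.+1) -> R) : Prop :=
  exists (C theta : R), 0 < theta < 1 /\
    forall (x y : int -> 'I_N.+1) (n : nat), SigmaA A x -> SigmaA A y ->
      (forall j : int, (- (n%:Z) <= j <= n%:Z) -> x j = y j) ->
      `|phi x - phi y| <= C * theta ^+ n.

Definition invariant_on {R : realType} {N : nat} (A : 'M[int]_N.+1)
  (nu : probability (Seq N) R) : Prop :=
  nu (SigmaA A) = 1%E /\
  forall B : set (Seq N), measurable B -> nu (@shift N @^-1` B) = nu B.

Definition word_cyl {N : nat} (n : nat) (w : n.-tuple 'I_N.+1)
  : set (Seq N) :=
  [set x | forall i : 'I_n, x (i%:Z) = tnth w i].

Definition Hn {R : realType} {N : nat} (nu : probability (Seq N) R) (n : nat)
  : R :=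
  - \sum_(w : n.-tuple 'I_N.+1)
       fine (nu (@word_cyl N n w)) * ln (fine (nu (@word_cyl N n w))).

(* measure-theoretic entropy h_nu(sigma) = lim_n H_nu(P_n)/n, with P_n the
   partition into n-cylinders (generating partition of 1-cylinders) *)
Definition entropy {R : realType} {N : nat} (nu : probability (Seq N) R) : R :=
  limn (fun n : nat => Hn nu n.+1 / (n.+1)%:R).

Definition equilibrium_state {R : realType} {N : nat} (A : 'M[int]_N.+1)
  (phi : (int -> 'I_N.+1) -> R) (mu : probability (Seq N) R) : Prop :=
  invariant_on A mu /\
  forall nu : probability (Seq N) R, invariant_on A nu ->
    entropy nu + Rintegral nu setT phi <= entropy mu + Rintegral mu setT phi.

(* r_D(x): smallest n >= 1 with sigma^n x in D; None stands for +oo *)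
Definition first_return {N : nat} (D : set (int -> 'I_N.+1))
  (x : int -> 'I_N.+1) : option nat :=
  match pselect (exists k : nat, `[< (0 < k)%N /\ D (iter_shift k x) >]) with
  | left H => Some (ex_minn H)
  | right _ => None
  end.

Fixpoint nth_return {N : nat} (D : set (int -> 'I_N.+1)) (n : nat)
  (x : int -> 'I_N.+1) : option nat :=
  match n with
  | 0 => Some 0%N
  | n'.+1 =>
      match nth_return D n' x with
      | Some k => match first_return D (iter_shift k x) with
                  | Some l => Some (k + l)%N
                  | None => None
                  end
      | None => None
      end
  end.

Definition opt_to_ereal {R : realType} (o : option nat) : \bar R :=
  match o with Some k => (k%:R)%:E | None => +oo%E end.

(* e^{alpha r_D^n(x)} in the extended reals (e^{+oo} = +oo, e^{-oo} = 0,
   and 0 * (+oo) = 0, so that e^{0 r} = 1) *)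
Definition exp_return {R : realType} {N : nat} (D : set (int -> 'I_N.+1))
  (alpha : R) (n : nat) (x : int -> 'I_N.+1) : \bar R :=
  expeR (alpha%:E * @opt_to_ereal R (nth_return D n x))%E.

(* Write R = SigmaA ∩ R' and S = SigmaA ∩ S' with R', S' depending only on the
   coordinates -m..m; as mu(SigmaA) = 1, R and S may be replaced by R' and S'.
   Let K = M + 2m.  Counting visits to R' gives
     r^(n-K)(sigma^K x) <= r^n(x) <= K + r^n(sigma^K x),
   so, according to the sign of alpha, e^(alpha r^n) lies between
   e^(alpha r^(n-K)) o sigma^K and e^(alpha K) e^(alpha r^n) o sigma^K.  The
   indicator of S' depends on the coordinates <= m and r^n o sigma^K on those
   >= m + M, so psi-mixing puts the integral over S' of e^(alpha r^n) o sigma^K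
   within a factor kappa of mu(S') times its integral, which by shift
   invariance is the integral of e^(alpha r^n). *)

From Pilot Require Import Defs.
From HB Require Import structures.
From mathcomp Require Import all_boot all_order all_algebra.
From mathcomp Require Import all_classical all_reals all_analysis measurable_realfun.
From mathcomp Require Import zify.
Import Order.TTheory GRing.Theory Num.Theory numFieldNormedType.Exports.
Local Open Scope classical_set_scope.
Local Open Scope ring_scope.

Section ReturnTimes.
Context {N : nat}.
Implicit Types (x y : int -> 'I_N.+1) (D : set (int -> 'I_N.+1)).

Lemma iter_shiftE (j : nat) x (i : int) : iter_shift j x i = x (i + j%:Z).
Proof.
elim: j i => [|j IH] i; first by rewrite addr0.
rewrite /iter_shift iterS; have := IH (i + 1); rewrite /iter_shift => H.
by rewrite /Defs.shift H; congr (x _); lia.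
Qed.

Lemma iter_shiftD (j k : nat) x :
  iter_shift j (iter_shift k x) = iter_shift (j + k) x.
Proof. by rewrite /iter_shift iterD. Qed.

Definition visit D x (j : nat) : bool := `[< D (iter_shift j x) >].

Definition visit_count D x (t : nat) : nat := count (visit D x) (iota 1 t).

Lemma visit_countD D x k t :
  visit_count D x (k + t) = (visit_count D x k + visit_count D (iter_shift k x) t)%N.
Proof.
rewrite /visit_count iotaD count_cat; congr addn.
rewrite addnC iotaDl count_map; apply: eq_count => j /=.
by rewrite /visit iter_shiftD addnC.
Qed.

Lemma visit_countS D x t :
  visit_count D x t.+1 = (visit_count D x t + visit D x t.+1)%N.
Proof.
rewrite -[in LHS]addn1 visit_countD; congr addn.
by rewrite /visit_count /= addn0 /visit iter_shiftD add1n.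
Qed.

Lemma visit_count_le D x t : (visit_count D x t <= t)%N.
Proof.
by apply: leq_trans (count_size _ _) _; rewrite size_iota.
Qed.

Lemma le_visit_count D x j k :
  (j <= k)%N -> (visit_count D x j <= visit_count D x k)%N.
Proof. by move=> /subnKC <-; rewrite visit_countD leq_addr. Qed.

Lemma visit_count_eq0 D x l :
  (forall j, (0 < j <= l)%N -> ~ D (iter_shift j x)) -> visit_count D x l = 0%N.
Proof.
elim: l => [//|l IH] Dl.
rewrite visit_countS IH => [|j /andP[j0 jl]]; last by apply: Dl; rewrite j0 ltnW.
by rewrite /visit; case: asboolP => // Dx; case: (Dl l.+1 _ Dx); rewrite leqnn.
Qed.

Lemma first_returnP D x :
  match first_return D x with
  | Some l => (0 < l)%N /\ D (iter_shift l x) /\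
              forall j, (0 < j < l)%N -> ~ D (iter_shift j x)
  | None => forall j, (0 < j)%N -> ~ D (iter_shift j x)
  end.
Proof.
rewrite /first_return; case: pselect => [H|H]; last first.
  by move=> j j0 Dj; apply: H; exists j; apply/asboolP.
case: ex_minnP => l /asboolP [l0 Dl] lmin; do 2!split=> //.
move=> j /andP[j0 jl] Dj; have := lmin j (asboolT (conj j0 Dj)).
by rewrite leqNgt jl.
Qed.

Definition reach_time (c : nat -> nat) (n : nat) (o : option nat) : Prop :=
  match o with
  | Some k => (n <= c k)%N /\ forall j, (j < k)%N -> (c j < n)%N
  | None => forall j, (c j < n)%N
  end.

Lemma reach_time_uniq c n o1 o2 : reach_time c n o1 -> reach_time c n o2 -> o1 = o2.
Proof.
case: o1 => [k1|]; case: o2 => [k2|] //=.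
- move=> [h1 m1] [h2 m2]; congr Some; apply/eqP; rewrite eqn_leq.
  apply/andP; split; rewrite leqNgt; apply/negP.
    by move=> /m1; rewrite ltnNge h2.
  by move=> /m2; rewrite ltnNge h1.
- by move=> [h1 _] /(_ k1); rewrite ltnNge h1.
- by move=> H [h2 _]; move: (H k2); rewrite ltnNge h2.
Qed.

Lemma nth_returnP D n x : reach_time (visit_count D x) n (nth_return D n x).
Proof.
elim: n => [|n IH] /=; first by split.
case: (nth_return D n x) IH => [k|] /= IH; last by move=> j; apply: ltnW (IH j).
case: IH => [nk kmin].
have ck : visit_count D x k = n.
  apply/eqP; rewrite eqn_leq nk andbT.
  case: k nk kmin => [|k] nk kmin //; rewrite visit_countS.
  by have := kmin k (ltnSn k); case: visit; rewrite ?addn1 ?addn0 // => /ltnW.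
have := first_returnP D (iter_shift k x).
case: (first_return D (iter_shift k x)) => [l [l0 [Dl lmin]]|never] /=.
  have cl j : (j < l)%N -> visit_count D (iter_shift k x) j = 0%N.
    move=> jl; apply: visit_count_eq0 => i /andP[i0 ij]; apply: lmin.
    by rewrite i0 (leq_ltn_trans ij jl).
  have cll : visit_count D (iter_shift k x) l = 1%N.
    case: l l0 Dl {lmin} cl => // l _ Dl cl.
    by rewrite visit_countS cl // /visit asboolT.
  split; first by rewrite visit_countD ck cll addn1.
  move=> j jl; case: (ltnP j k) => jk; first exact: leq_trans (kmin j jk) _.
  by rewrite -(subnKC jk) visit_countD ck cl ?addn0 // ltn_subLR.
move=> j; case: (leqP j k) => jk; first by rewrite ltnS -ck le_visit_count.
rewrite -(subnKC (ltnW jk)) visit_countD ck visit_count_eq0 ?addn0 //.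
by move=> i /andP[i0 _]; apply: never.
Qed.

Lemma nth_return_ext D D' n x x' :
  (forall j, (0 < j)%N -> (D (iter_shift j x) <-> D' (iter_shift j x'))) ->
  nth_return D n x = nth_return D' n x'.
Proof.
move=> DD'; have cE : visit_count D x =1 visit_count D' x'.
  move=> t; apply: eq_in_count => j; rewrite mem_iota => /andP[j1 _].
  by apply/idP/idP => /asboolP H; apply/asboolP; apply/(DD' j j1).
apply: (@reach_time_uniq (visit_count D x) n); first exact: nth_returnP.
have := nth_returnP D' n x'; case: (nth_return D' n x') => [k|] /=.
  by move=> [h1 h2]; split; [rewrite cE | move=> j /h2; rewrite cE].
by move=> H j; rewrite cE.
Qed.

Lemma nth_return_le_visit_count D n x t :
  (n <= visit_count D x t)%N -> exists2 k, nth_return D n x = Some k & (k <= t)%N.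
Proof.
move=> nt; have := nth_returnP D n x.
case: (nth_return D n x) => [k [_ kmin]|]; last by move/(_ t); rewrite ltnNge nt.
by exists k => //; rewrite leqNgt; apply/negP => /kmin; rewrite ltnNge nt.
Qed.

(* [None] stands for an infinite time. *)
Definition le_time (o1 o2 : option nat) : Prop :=
  match o2 with
  | None => True
  | Some b => if o1 is Some a then (a <= b)%N else False
  end.

Lemma nth_return_le_shift D n x K :
  le_time (nth_return D n x) (omap (addn^~ K) (nth_return D n (iter_shift K x))).
Proof.
have := nth_returnP D n (iter_shift K x).
case: (nth_return D n (iter_shift K x)) => [k [nk _]|] //=.
have /nth_return_le_visit_count[k' -> ?] : (n <= visit_count D x (K + k))%N.
  by rewrite visit_countD; apply: leq_trans nk (leq_addl _ _).
by rewrite /= addnC.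
Qed.

Lemma nth_return_shift_le D n x K :
  le_time (nth_return D (n - K) (iter_shift K x)) (nth_return D n x).
Proof.
have := nth_returnP D n x; case: (nth_return D n x) => [k [nk _]|] //.
case: (leqP n K) => nK; first by move: nK; rewrite -subn_eq0 => /eqP ->.
have Kk : (K <= k)%N.
  by apply: leq_trans (ltnW nK) (leq_trans nk (visit_count_le _ _ _)).
have /nth_return_le_visit_count[k' -> k'k] :
    (n - K <= visit_count D (iter_shift K x) (k - K))%N.
  rewrite leq_subLR; move: nk; rewrite -{1}(subnKC Kk) visit_countD.
  by move/leq_trans; apply; rewrite leq_add2r visit_count_le.
exact: leq_trans k'k (leq_subr K k).
Qed.

End ReturnTimes.

Definition exp_time {R : realType} (alpha : R) (o : option nat) : \bar R :=
  expeR (alpha%:E * opt_to_ereal o)%E.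

Section ExpTime.
Context {R : realType}.
Implicit Types (alpha : R) (o : option nat).
Local Open Scope ereal_scope.

Lemma exp_time_ge0 alpha o : 0 <= exp_time alpha o.
Proof. exact: expeR_ge0. Qed.

Lemma exp_time0 o : exp_time (0 : R) o = 1.
Proof. by rewrite /exp_time mul0e expeR0. Qed.

Lemma exp_time_Some alpha a : exp_time alpha (Some a) = (expR (alpha * a%:R))%:E.
Proof. by []. Qed.

Lemma exp_time_None_gt0 alpha : (0 < alpha)%R -> exp_time alpha None = +oo.
Proof. by move=> a0; rewrite /exp_time /= mulry gtr0_sg // mul1e. Qed.

Lemma exp_time_None_lt0 alpha : (alpha < 0)%R -> exp_time alpha None = 0.
Proof. by move=> a0; rewrite /exp_time /= mulry ltr0_sg // mulN1e. Qed.

Lemma exp_time_homo alpha o1 o2 :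
  (0 <= alpha)%R -> le_time o1 o2 -> exp_time alpha o1 <= exp_time alpha o2.
Proof.
rewrite le0r => /orP[/eqP ->|a0]; first by rewrite !exp_time0.
case: o2 => [b|] /=; last by rewrite exp_time_None_gt0 // leey.
case: o1 => [a|] //= ab; rewrite !exp_time_Some lee_fin ler_expR.
by apply: ler_wpM2l; [exact: ltW | rewrite ler_nat].
Qed.

Lemma exp_time_nhomo alpha o1 o2 :
  (alpha <= 0)%R -> le_time o1 o2 -> exp_time alpha o2 <= exp_time alpha o1.
Proof.
rewrite le_eqVlt => /orP[/eqP ->|a0]; first by rewrite !exp_time0.
case: o2 => [b|] /=; last by rewrite exp_time_None_lt0 // exp_time_ge0.
case: o1 => [a|] //= ab; rewrite !exp_time_Some lee_fin ler_expR.
by apply: ler_wnM2l; [exact: ltW | rewrite ler_nat].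
Qed.

Lemma exp_time_add alpha K o :
  exp_time alpha (omap (addn^~ K) o) = (expR (alpha * K%:R))%:E * exp_time alpha o.
Proof.
case: o => [a|] /=; first by rewrite !exp_time_Some -EFinM -expRD natrD mulrDr addrC.
case: (ltgtP alpha 0%R) => [a0|a0|->].
- by rewrite exp_time_None_lt0 // mule0.
- by rewrite exp_time_None_gt0 // gt0_muley // lte_fin expR_gt0.
- by rewrite !exp_time0 mul0r expR0 mule1.
Qed.

End ExpTime.

Section Locality.
Context {N : nat}.
Implicit Types (x y : int -> 'I_N.+1) (E D : set (int -> 'I_N.+1)).

Definition agree (k : nat) x y : Prop :=
  forall j : int, (- (k%:Z) <= j <= k%:Z) -> x j = y j.

Definition local (k : nat) E : Prop := forall x y, agree k x y -> E x -> E y.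

Lemma agree_sym k x y : agree k x y -> agree k y x.
Proof. by move=> H j /H ->. Qed.

Lemma agree_le k k' x y : (k <= k')%N -> agree k' x y -> agree k x y.
Proof. by move=> kk H j jk; apply: H; lia. Qed.

Lemma agree_iter_shift k j x y :
  agree (k + j) x y -> agree k (iter_shift j x) (iter_shift j y).
Proof. by move=> H i ik; rewrite !iter_shiftE; apply: H; lia. Qed.

Lemma localP k E x y : local k E -> agree k x y -> (E x <-> E y).
Proof. by move=> lE a; split; apply: lE => //; exact: agree_sym. Qed.
Arguments localP {k E x y}.

Lemma localU k E D : local k E -> local k D -> local k (E `|` D).
Proof. by move=> lE lD x y a [/(lE _ _ a)|/(lD _ _ a)]; [left|right]. Qed.

Lemma local_iter_shift k j E : local k E -> local (k + j) [set x | E (iter_shift j x)].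
Proof. by move=> lE x y a /=; apply: lE; exact: agree_iter_shift. Qed.

(* It takes countably many values, so a [local] set is a countable union of
   cylinders. *)
Definition window (k : nat) x : seq 'I_N.+1 :=
  [seq x (i%:Z - k%:Z) | i <- iota 0 (2 * k).+1].

Lemma window_eqP k x y : window k x = window k y <-> agree k x y.
Proof.
split=> [/eq_in_map xy j jk|xy]; last first.
  by apply/eq_in_map => i; rewrite mem_iota add0n => /andP[_ ik]; apply: xy; lia.
have := xy (absz (j + k%:Z)); rewrite mem_iota add0n.
have -> : (absz (j + k%:Z))%:Z - k%:Z = j by lia.
by apply; apply/andP; split => //; lia.
Qed.

Lemma local_measurable {k} {E : set (Seq N)} : local k E -> measurable E.
Proof.
move=> lE.
have -> : E = \bigcup_(s : seq 'I_N.+1) (E `&` [set x | window k x = s]).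
  by apply/seteqP; split => [x Ex|x [s _ []//]]; exists (window k x).
apply: countable_bigcupT_measurable; first exact: countableP.
move=> s; have [[y [Ey <-]]|none] := pselect (exists y, E y /\ window k y = s).
  have -> : E `&` [set x | window k x = window k y] = [set x | agree k x y].
    apply/seteqP; split => x /= => [[_ /window_eqP //]|xy].
    by split; [apply: (lE y) => //; exact: agree_sym | exact/window_eqP].
  by apply: sub_gen_smallest; exists k, y.
have -> : E `&` [set x | window k x = s] = set0.
  by apply/seteqP; split => x //= [Ex xs]; apply: none; exists x.
exact: measurable0.
Qed.

Lemma local_nth_return_fiber m D n k :
  local m D -> local (k + m) [set x | nth_return D n x = Some k].
Proof.
move=> lD x y a /= xk.
have cE j : (j <= k)%N -> visit_count D x j = visit_count D y j.
  elim: j => [//|j IH] jk; rewrite !visit_countS IH ?(ltnW jk) //.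
  have ag : agree m (iter_shift j.+1 x) (iter_shift j.+1 y).
    by apply: agree_iter_shift; apply: agree_le a; lia.
  by rewrite /visit (propext (localP lD ag)).
have := nth_returnP D n x; rewrite xk => -[nk kmin].
apply: (@reach_time_uniq (visit_count D y) n); first exact: nth_returnP.
by split=> [|j jk]; rewrite -cE ?(ltnW jk) // kmin.
Qed.

End Locality.

Lemma measurable_fun_option {d d'} {T : measurableType d} {T' : measurableType d'}
    (F : T -> option nat) (h : option nat -> T') :
  (forall k, measurable [set x | F x = Some k]) -> measurable_fun setT (h \o F).
Proof.
move=> mF _ Y mY; rewrite setTI.
have -> : (h \o F) @^-1` Y =
    \bigcup_k ([set x | F x = Some k] `&` [set _ | Y (h (Some k))]) `|`
    (~` \bigcup_k [set x | F x = Some k]) `&` [set _ | Y (h None)].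
  apply/seteqP; split => x /=.
    case E: (F x) => [k|] Yx; first by left; exists k.
    by right; split => // -[k _ /=]; rewrite E.
  move=> [[k _ /= [-> //]]|[nF YN]].
  by case E: (F x) => [k|] //; case: nF; exists k.
have mP (P : Prop) : measurable [set _ : T | P].
  have [p|np] := pselect P; first by rewrite (_ : [set _ | P] = setT) // predeqE.
  by rewrite (_ : [set _ | P] = set0) // predeqE.
apply: measurableU; first by apply: bigcupT_measurable => k; exact: measurableI.
by apply: measurableI => //; apply: measurableC; exact: bigcupT_measurable.
Qed.

Section SequenceSpace.
Context {N : nat}.
Implicit Types (A : 'M[int]_N.+1) (x : int -> 'I_N.+1) (D : set (int -> 'I_N.+1)).

Lemma measurable_iter_shift K : measurable_fun setT (iter_shift K : Seq N -> Seq N).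
Proof.
apply: (@measurability _ _ (Seq N) (Seq N) setT _ (cylinders N)) => //.
move=> _ [C [k [w ->]] <-]; rewrite setTI; apply: (@local_measurable N (k + K)).
apply: local_iter_shift => x y xy /= xw j jk.
by rewrite -(xy j jk); exact: xw.
Qed.

Lemma SigmaA_iter_shift A j x : SigmaA A (iter_shift j x) <-> SigmaA A x.
Proof.
split=> H n; last first.
  by rewrite !iter_shiftE (_ : n + 1 + j%:Z = n + j%:Z + 1); [exact: H | lia].
have := H (n - j%:Z); rewrite !iter_shiftE.
by rewrite (_ : n - j%:Z + j%:Z = n) 1?(_ : n - j%:Z + 1 + j%:Z = n + 1) //; lia.
Qed.

Lemma measurable_SigmaA A : measurable (SigmaA A : set (Seq N)).
Proof.
have -> : (SigmaA A : set (Seq N)) = \bigcap_(k : nat)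
    [set x | forall n : int, (- (k%:Z) <= n <= k%:Z) -> A (x n) (x (n + 1)) = 1].
  apply/seteqP; split => x /=; first by move=> H k _ n _; exact: H.
  by move=> H n; apply: (H (absz n)) => //; lia.
apply: bigcapT_measurable => k; apply: (@local_measurable N k.+1).
move=> x y a /= H n nk.
rewrite -(a n); last by lia.
by rewrite -(a (n + 1)); [exact: H | lia].
Qed.

Lemma cyl_union_SigmaAI {A m S} :
  cyl_union A m S -> exists2 S', local m S' & S = SigmaA A `&` S'.
Proof.
case=> s ->; exists (\big[setU/set0]_(w <- s) [set x | agree m x w]).
  elim: s => [|w s IH]; rewrite ?big_nil ?big_cons //.
  by apply: localU => // x y a /= xw j jm; rewrite -(a j jm); exact: xw.
elim: s => [|w s IH]; rewrite ?big_nil ?big_cons ?setI0 //.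
by rewrite IH setIUr.
Qed.

Lemma nth_return_SigmaAI A D n x :
  nth_return (SigmaA A `&` D) n x =
  nth_return (if `[< SigmaA A x >] then D else set0) n x.
Proof.
apply: nth_return_ext => j _; case: asboolP => Sx.
  by split=> [[]//|Dj]; split=> //; apply/SigmaA_iter_shift.
by split=> [[/SigmaA_iter_shift]|].
Qed.

Lemma measurable_nth_return_fiber m D n k :
  local m D -> measurable ([set x | nth_return D n x = Some k] : set (Seq N)).
Proof.
by move=> lD; apply: (@local_measurable _ (k + m)); exact: local_nth_return_fiber.
Qed.

Lemma measurable_nth_return_SigmaAI_fiber A m D n k :
  local m D ->
  measurable ([set x | nth_return (SigmaA A `&` D) n x = Some k] : set (Seq N)).
Proof.
move=> lD; have mS := measurable_SigmaA A.
rewrite (_ : [set x | _] = (SigmaA A `&` [set x | nth_return D n x = Some k]) `|`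
    (~` SigmaA A `&` [set x | nth_return set0 n x = Some k])); last first.
  apply/seteqP; split => x /=; rewrite nth_return_SigmaAI; case: asboolP => Sx.
  - by left.
  - by right.
  - by case=> -[].
  - by case=> -[].
apply: measurableU; apply: measurableI.
- exact: mS.
- exact: measurable_nth_return_fiber lD.
- exact: measurableC.
- by apply: (measurable_nth_return_fiber 0) => x y.
Qed.

End SequenceSpace.

Section Truncation.
Context {R : realType} {d} {T : measurableType d} (mu : {measure set T -> \bar R}).
Local Open Scope ereal_scope.

Lemma trunc_nd (h : \bar R) : nondecreasing_seq (fun L : nat => mine h (L%:R)%:E).
Proof.
by move=> a b ab; rewrite le_min ge_min lexx /= ge_min lee_fin ler_nat ab orbT.
Qed.

Lemma trunc_cvg (h : \bar R) : 0 <= h -> (fun L : nat => mine h (L%:R)%:E) @ \oo --> h.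
Proof.
move=> h0; suff hE : ereal_sup (range (fun L : nat => mine h (L%:R)%:E)) = h.
  by rewrite -[X in _ --> X]hE; apply/ereal_nondecreasing_cvgn/trunc_nd.
apply/eqP; rewrite eq_le; apply/andP; split.
  by apply: ge_ereal_sup => _ [L _ <-]; rewrite ge_min lexx.
case: h h0 => [r| |] // h0.
  apply: ereal_sup_ge; exists (mine r%:E ((Num.truncn r).+1%:R)%:E).
    by exists (Num.truncn r).+1.
  by rewrite min_l // lee_fin ltW // truncnS_gt.
rewrite leye_eq; apply/eqP/eqyP => r _.
have rL : r%:E <= mine +oo ((Num.truncn r).+1%:R)%:E.
  by rewrite min_r ?leey // lee_fin ltW // truncnS_gt.
by apply: le_trans rL (ereal_sup_ubound _); exists (Num.truncn r).+1.
Qed.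

Lemma ge0_integral_trunc (D : set T) (H : T -> \bar R) :
  measurable D -> (forall x, D x -> 0 <= H x) -> measurable_fun D H ->
  \int[mu]_(x in D) H x =
  ereal_sup (range (fun L : nat => \int[mu]_(x in D) mine (H x) (L%:R)%:E)).
Proof.
move=> mD H0 mH; have HL0 L x : D x -> 0 <= mine (H x) (L%:R)%:E.
  by move=> Dx; rewrite le_min H0 // lee_fin ler0n.
transitivity (\int[mu]_(x in D) limn (fun L : nat => mine (H x) (L%:R)%:E)).
  by apply: eq_integral => x /set_mem Dx; rewrite (cvg_lim _ (trunc_cvg _ (H0 x Dx))).
rewrite monotone_convergence //.
- apply: cvg_lim => //; apply: ereal_nondecreasing_cvgn => a b ab.
  apply: ge0_le_integral => //; try exact: measurable_mine.
  + exact: HL0.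
  + by move=> x _; exact: trunc_nd.
- by move=> L; apply: measurable_mine.
- by move=> x _; exact: trunc_nd.
Qed.

End Truncation.

Lemma integrable_bounded {R : realType} {d} {T : measurableType d}
    (mu : {finite_measure set T -> \bar R}) (g : T -> R) (c : R) :
  measurable_fun setT g -> (forall x, `|g x| <= c) ->
  mu.-integrable setT (fun x => (g x)%:E).
Proof.
move=> mg gc.
apply: le_integrable (finite_measure_integrable_cst _ c measurableT) => //.
- exact/measurable_EFinP.
- by move=> x _ /=; rewrite lee_fin (le_trans (gc x) (ler_norm _)).
Qed.

Section ReturnTimeMixing.
Context {R : realType} {N : nat} (A : 'M[int]_N.+1) (mu : probability (Seq N) R).
Hypothesis mu_SigmaA : mu (SigmaA A) = 1%E.
Hypothesis mu_shift :
  forall B : set (Seq N), measurable B -> mu (@Defs.shift N @^-1` B) = mu B.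
Local Open Scope ereal_scope.

Lemma measure_iter_shift K (B : set (Seq N)) :
  measurable B -> mu ((iter_shift K : Seq N -> Seq N) @^-1` B) = mu B.
Proof.
elim: K B => [//|K IH] B mB.
rewrite (_ : _ @^-1` B = iter_shift K @^-1` (@Defs.shift N @^-1` B)) // IH ?mu_shift //.
by have := measurable_iter_shift 1 measurableT _ mB; rewrite setTI.
Qed.

Lemma ge0_integral_iter_shift K (H : Seq N -> \bar R) :
  measurable_fun setT H -> (forall x, 0 <= H x) ->
  \int[mu]_x H (iter_shift K x) = \int[mu]_x H x.
Proof.
move=> mH H0; have mK := measurable_iter_shift (N := N) K.
transitivity (\int[pushforward mu (iter_shift K : Seq N -> Seq N)]_x H x).
  by rewrite ge0_integral_pushforward // preimage_setT.
apply: eq_measure_integral => B mB _.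
exact: measure_iter_shift.
Qed.

Lemma measure_SigmaAC : mu (~` SigmaA A) = 0.
Proof. by rewrite probability_setC ?mu_SigmaA ?subee //; exact: measurable_SigmaA. Qed.

Lemma ae_SigmaA (P : Seq N -> Prop) :
  (forall x, SigmaA A x -> P x) -> {ae mu, forall x, P x}.
Proof.
move=> SP; exists (~` SigmaA A); split; last by move=> x /= nP /SP.
- by apply: measurableC; exact: measurable_SigmaA.
- exact: measure_SigmaAC.
Qed.

Lemma measure_SigmaAI (S : set (Seq N)) : measurable S -> mu (SigmaA A `&` S) = mu S.
Proof.
move=> mS; have mSig := measurable_SigmaA A.
rewrite [RHS](measureDI mu mS mSig) [X in _ = X + _](_ : _ = 0) ?add0e 1?setIC //.
apply: (subset_measure0 (measurableD mS mSig) (measurableC mSig)); first by move=> x [].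
exact: measure_SigmaAC.
Qed.

Variables (M : nat) (kappa : R).
Hypothesis kappa_gt0 : (0 < kappa)%R.
Hypothesis psi_mix : forall (p : int) (f g : Seq N -> R),
  (forall x, (0 <= f x)%R) -> (forall x, (0 <= g x)%R) ->
  measurable_fun setT f -> measurable_fun setT g ->
  mu.-integrable setT (fun x => (f x)%:E) ->
  mu.-integrable setT (fun x => (g x)%:E) ->
  (forall x y : Seq N, (forall j : int, (j <= p)%R -> x j = y j) -> f x = f y) ->
  (forall x y : Seq N, (forall j : int, (p + M%:Z <= j)%R -> x j = y j) ->
      g x = g y) ->
  (kappa^-1)%:E * ((\int[mu]_x (f x)%:E) * (\int[mu]_x (g x)%:E))
     <= \int[mu]_x (f x * g x)%:E /\
  \int[mu]_x (f x * g x)%:E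
     <= kappa%:E * ((\int[mu]_x (f x)%:E) * (\int[mu]_x (g x)%:E)).

(* psi-mixing for an indicator of the past and a nonnegative, possibly
   infinite, function of the future: apply the hypothesis to the
   truncations [min G L] and take the supremum over [L]. *)
Lemma psi_mixing_indic (p : int) (S : set (Seq N)) (G : Seq N -> \bar R) :
  measurable S ->
  (forall x y : Seq N, (forall j : int, (j <= p)%R -> x j = y j) -> S x -> S y) ->
  (forall x, 0 <= G x) -> measurable_fun setT G ->
  (forall x y : Seq N, (forall j : int, (p + M%:Z <= j)%R -> x j = y j) ->
      G x = G y) ->
  (kappa^-1)%:E * mu S * \int[mu]_x G x <= \int[mu]_(x in S) G x /\
  \int[mu]_(x in S) G x <= kappa%:E * mu S * \int[mu]_x G x.
Proof.
move=> mS pS G0 mG fG.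
pose GL (L : nat) x := mine (G x) (L%:R)%:E.
have GL0 L x : 0 <= GL L x by rewrite le_min G0 lee_fin ler0n.
have mGL L : measurable_fun setT (GL L) by exact: measurable_mine.
have GLE L x : (fine (GL L x))%:E = GL L x.
  rewrite fineK // ge0_fin_numE ?GL0 //.
  by apply: le_lt_trans (ltry (L%:R)); rewrite ge_min lexx orbT.
have mixL L :
    (kappa^-1)%:E * (mu S * \int[mu]_x GL L x) <= \int[mu]_(x in S) GL L x /\
    \int[mu]_(x in S) GL L x <= kappa%:E * (mu S * \int[mu]_x GL L x).
  have mgL : measurable_fun setT (fun x => fine (GL L x)) by exact: measurableT_comp.
  have intGL : \int[mu]_x (fine (GL L x))%:E = \int[mu]_x GL L x.
    by apply: eq_integral => x _; exact: GLE.
  have intSGL : \int[mu]_x (\1_S x * fine (GL L x))%:E = \int[mu]_(x in S) GL L x.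
    rewrite [RHS]integral_mkcond; apply: eq_integral => x _.
    by rewrite patchE indicE; case: (x \in S); rewrite ?mul1r ?mul0r ?GLE.
  have := psi_mix p (\1_S) (fun x => fine (GL L x)).
  rewrite integral_indic // setIT intGL intSGL; apply.
  - by move=> x; rewrite indicE; case: (x \in S).
  - by move=> x; exact: fine_ge0.
  - exact: measurable_indic.
  - exact: mgL.
  - exact: integrable_indic.
  - apply: (@integrable_bounded _ _ _ mu _ L%:R) => // x.
    by rewrite ger0_norm ?fine_ge0 // -lee_fin GLE ge_min lexx orbT.
  - move=> x y xy; rewrite /indic (_ : (x \in S) = (y \in S)) //.
    by apply/idP/idP => /set_mem h; apply/mem_set; apply: pS h => j /xy.
  - by move=> x y xy; rewrite /GL (fG x y xy).
have IG : \int[mu]_x G x = ereal_sup (range (fun L => \int[mu]_x GL L x)).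
  exact: ge0_integral_trunc.
have IGS : \int[mu]_(x in S) G x =
           ereal_sup (range (fun L => \int[mu]_(x in S) GL L x)).
  by apply: ge0_integral_trunc => //; exact: measurable_funS mG.
have muSfin : mu S \is a fin_num.
  by rewrite ge0_fin_numE ?(le_lt_trans (probability_le1 _ mS)) ?ltry.
split.
  rewrite IGS IG -(fineK muSfin) -EFinM -ereal_supZl; last 2 first.
  - by apply/set0P; exists (\int[mu]_x GL 0%N x); exists 0%N.
  - by rewrite mulr_ge0 ?invr_ge0 ?(ltW kappa_gt0) // fine_ge0.
  apply: ge_ereal_sup => _ [_ [L _ <-] <-].
  apply: le_trans (ereal_sup_ubound _); last by exists L.
  by rewrite EFinM fineK // -muleA; exact: (proj1 (mixL L)).
rewrite IGS; apply: ge_ereal_sup => _ [L _ <-].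
apply: le_trans (proj2 (mixL L)) _; rewrite -muleA.
apply: lee_wpmul2l; first by rewrite lee_fin ltW.
apply: lee_wpmul2l => //; rewrite IG.
by apply: ereal_sup_ubound; exists L.
Qed.

Variables (alpha : R) (m : nat) (R' S' : set (Seq N)).
Hypotheses (lR : local m R') (lS : local m S').

Let K := (M + 2 * m)%N.

Let mS : measurable S' := local_measurable lS.

Lemma measurable_exp_return n :
  measurable_fun setT (exp_return R' alpha n : Seq N -> _).
Proof.
apply: (@measurable_fun_option _ _ (Seq N) _ _ (exp_time alpha)) => k.
exact: measurable_nth_return_fiber lR.
Qed.

Lemma measurable_exp_return_SigmaAI n :
  measurable_fun setT (exp_return (SigmaA A `&` R') alpha n : Seq N -> _).
Proof.
apply: (@measurable_fun_option _ _ (Seq N) _ _ (exp_time alpha)) => k.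
exact: measurable_nth_return_SigmaAI_fiber lR.
Qed.

Lemma measurable_exp_return_shift n :
  measurable_fun setT (fun x : Seq N => exp_return R' alpha n (iter_shift K x)).
Proof. exact: measurableT_comp (measurable_exp_return n) (measurable_iter_shift K). Qed.

Lemma exp_return_SigmaAI n x :
  SigmaA A x -> exp_return (SigmaA A `&` R') alpha n x = exp_return R' alpha n x.
Proof. by move=> Sx; rewrite /exp_return nth_return_SigmaAI asboolT. Qed.

Lemma integral_exp_return_SigmaAI n :
  \int[mu]_x exp_return (SigmaA A `&` R') alpha n x =
  \int[mu]_x exp_return R' alpha n x.
Proof.
apply: ge0_ae_eq_integral => //.
- exact: measurable_exp_return_SigmaAI.
- exact: measurable_exp_return.
- by move=> x _; exact: exp_time_ge0.
- by move=> x _; exact: exp_time_ge0.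
- by apply: ae_SigmaA => x Sx _; exact: exp_return_SigmaAI.
Qed.

Lemma integral_exp_return_SigmaAI_in n :
  \int[mu]_(x in SigmaA A `&` S') exp_return (SigmaA A `&` R') alpha n x =
  \int[mu]_(x in S') exp_return R' alpha n x.
Proof.
have mSig := measurable_SigmaA A.
rewrite integral_mkcond [RHS]integral_mkcond; apply: ge0_ae_eq_integral => //.
- apply/(measurable_restrictT _ (measurableI _ _ mSig mS)).
  exact: measurable_funS (measurable_exp_return_SigmaAI n).
- apply/(measurable_restrictT _ mS).
  exact: measurable_funS (measurable_exp_return n).
- by move=> x _; rewrite patchE; case: ifP => // _; exact: exp_time_ge0.
- by move=> x _; rewrite patchE; case: ifP => // _; exact: exp_time_ge0.
apply: ae_SigmaA => x Sx _; rewrite !patchE exp_return_SigmaAI //.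
have -> // : (x \in SigmaA A `&` S') = (x \in S').
by apply/idP/idP => /set_mem h; apply/mem_set; [case: h | split].
Qed.

(* [S'] is determined by the coordinates [<= m] and, as [R'] is determined by
   the coordinates [-m..m], [exp_return R' alpha n \o iter_shift K] by the
   coordinates [>= K + 1 - m = m + M + 1]. *)
Lemma exp_return_mixing n :
  (kappa^-1)%:E * mu S' * \int[mu]_x exp_return R' alpha n x
    <= \int[mu]_(x in S') exp_return R' alpha n (iter_shift K x) /\
  \int[mu]_(x in S') exp_return R' alpha n (iter_shift K x)
    <= kappa%:E * mu S' * \int[mu]_x exp_return R' alpha n x.
Proof.
rewrite -(ge0_integral_iter_shift K _ (measurable_exp_return n)); last first.
  by move=> x; exact: exp_time_ge0.
apply: (psi_mixing_indic m%:Z) => //.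
- by move=> x y xy; apply: lS => j jm; apply: xy; lia.
- by move=> x; exact: exp_time_ge0.
- exact: measurable_exp_return_shift.
- move=> x y xy; congr exp_time; apply: nth_return_ext => j j0; apply: localP lR _.
  by move=> i im; rewrite !iter_shiftE; apply: xy; rewrite /K; lia.
Qed.

Let le_integral_S' (f g : Seq N -> \bar R) :
  measurable_fun setT f -> measurable_fun setT g -> (forall x, 0 <= f x) ->
  (forall x, f x <= g x) -> \int[mu]_(x in S') f x <= \int[mu]_(x in S') g x.
Proof.
move=> mf mg f0 fg; apply: ge0_le_integral => //.
- exact: measurable_funS mf.
- exact: measurable_funS mg.
Qed.

Let integral_S'_shiftZ n :
  \int[mu]_(x in S')
      ((expR (alpha * K%:R))%:E * exp_return R' alpha n (iter_shift K x)) =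
  (expR (alpha * K%:R))%:E * \int[mu]_(x in S') exp_return R' alpha n (iter_shift K x).
Proof.
apply: ge0_integralZl_EFin => //; first by move=> x _; exact: exp_time_ge0.
exact: measurable_funS (measurable_exp_return_shift n).
Qed.

Lemma exp_return_bounds_ge0 n : (0 <= alpha)%R ->
  (kappa^-1)%:E * mu S' * \int[mu]_x exp_return R' alpha (n - K) x
    <= \int[mu]_(x in S') exp_return R' alpha n x /\
  \int[mu]_(x in S') exp_return R' alpha n x
    <= kappa%:E * mu S' * (expR (alpha * K%:R))%:E
         * \int[mu]_x exp_return R' alpha n x.
Proof.
move=> a0; split.
  apply: le_trans (proj1 (exp_return_mixing (n - K))) _.
  apply: le_integral_S' => [||x|x]; rewrite ?exp_time_ge0 //.
  - exact: measurable_exp_return_shift.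
  - exact: measurable_exp_return.
  - exact/exp_time_homo/nth_return_shift_le.
have e0 : 0 <= (expR (alpha * K%:R))%:E by rewrite lee_fin expR_ge0.
rewrite muleAC muleC.
apply: (le_trans _ (lee_wpmul2l e0 (proj2 (exp_return_mixing n)))).
rewrite -integral_S'_shiftZ; apply: le_integral_S' => [||x|x]; rewrite ?exp_time_ge0 //.
- exact: measurable_exp_return.
- exact: measurable_funeM (measurable_exp_return_shift n).
- by rewrite -exp_time_add; apply/exp_time_homo/nth_return_le_shift.
Qed.

Lemma exp_return_bounds_le0 n : (alpha <= 0)%R ->
  (kappa^-1)%:E * mu S' * (expR (alpha * K%:R))%:E
      * \int[mu]_x exp_return R' alpha n x
    <= \int[mu]_(x in S') exp_return R' alpha n x /\
  \int[mu]_(x in S') exp_return R' alpha n x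
    <= kappa%:E * mu S' * \int[mu]_x exp_return R' alpha (n - K) x.
Proof.
move=> a0; split; last first.
  apply: le_trans (proj2 (exp_return_mixing (n - K))).
  apply: le_integral_S' => [||x|x]; rewrite ?exp_time_ge0 //.
  - exact: measurable_exp_return.
  - exact: measurable_exp_return_shift.
  - exact/exp_time_nhomo/nth_return_shift_le.
have e0 : 0 <= (expR (alpha * K%:R))%:E by rewrite lee_fin expR_ge0.
rewrite muleAC muleC.
apply: le_trans (lee_wpmul2l e0 (proj1 (exp_return_mixing n))) _.
rewrite -integral_S'_shiftZ; apply: le_integral_S' => [||x|x].
- exact: measurable_funeM (measurable_exp_return_shift n).
- exact: measurable_exp_return.
- by rewrite mule_ge0 ?exp_time_ge0.
- by rewrite -exp_time_add; apply/exp_time_nhomo/nth_return_le_shift.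
Qed.

End ReturnTimeMixing.

Theorem lemma3p3 (R : realType) (N : nat) (A : 'M[int]_N.+1)
  (A01 : zero_one_mx A) (Aaper : aperiodic_mx A)
  (phi : (int -> 'I_N.+1) -> R) (phi_holder : holder A phi)
  (mu : probability (Seq N) R) (mu_eq : equilibrium_state A phi mu)
  (mu_unique : forall nu : probability (Seq N) R,
      equilibrium_state A phi nu -> nu = mu :> (set (Seq N) -> \bar R))
  (M : nat) (kappa : R) (M_gt0 : (0 < M)%N) (kappa_gt1 : 1 < kappa)
  (psi_mix : forall (p : int) (f g : Seq N -> R),
      (forall x, 0 <= f x) -> (forall x, 0 <= g x) ->
      measurable_fun setT f -> measurable_fun setT g ->
      mu.-integrable setT (fun x => (f x)%:E) ->
      mu.-integrable setT (fun x => (g x)%:E) ->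
      (forall x y : Seq N, (forall j : int, j <= p -> x j = y j) ->
          f x = f y) ->
      (forall x y : Seq N, (forall j : int, p + M%:Z <= j -> x j = y j) ->
          g x = g y) ->
      ((kappa^-1)%:E * ((\int[mu]_x (f x)%:E) * (\int[mu]_x (g x)%:E))
         <= \int[mu]_x (f x * g x)%:E)%E /\
      (\int[mu]_x (f x * g x)%:E
         <= kappa%:E * ((\int[mu]_x (f x)%:E) * (\int[mu]_x (g x)%:E)))%E)
  (m : nat) (Rs S : set (Seq N))
  (hR : cyl_union A m Rs) (hS : cyl_union A m S)
  (n : nat) (hn : (M + 2 * m <= n)%N) (alpha : R) :
  (0 <= alpha ->
     ((kappa^-1)%:E * mu S
        * \int[mu]_x exp_return Rs alpha (n - (M + 2 * m)) x
      <= \int[mu]_(x in S) exp_return Rs alpha n x)%E /\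
     (\int[mu]_(x in S) exp_return Rs alpha n x
      <= kappa%:E * mu S * (expR (alpha * (M + 2 * m)%:R))%:E
           * \int[mu]_x exp_return Rs alpha n x)%E) /\
  (alpha <= 0 ->
     ((kappa^-1)%:E * mu S * (expR (alpha * (M + 2 * m)%:R))%:E
        * \int[mu]_x exp_return Rs alpha n x
      <= \int[mu]_(x in S) exp_return Rs alpha n x)%E /\
     (\int[mu]_(x in S) exp_return Rs alpha n x
      <= kappa%:E * mu S
           * \int[mu]_x exp_return Rs alpha (n - (M + 2 * m)) x)%E).
Proof.
have [[mu_SigmaA mu_shift] _] := mu_eq.
have kappa_gt0 : 0 < kappa := lt_trans ltr01 kappa_gt1.
have [R' lR ->] := cyl_union_SigmaAI hR.
have [S' lS ->] := cyl_union_SigmaAI hS.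
rewrite (measure_SigmaAI _ _ mu_SigmaA _ (local_measurable lS)).
rewrite !(integral_exp_return_SigmaAI _ _ mu_SigmaA _ _ _ lR).
rewrite (integral_exp_return_SigmaAI_in _ _ mu_SigmaA _ _ _ _ lR lS).
by split=> alpha_sgn; [apply: exp_return_bounds_ge0 | apply: exp_return_bounds_le0].
Qed.
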